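(* Let $S\subseteq M_n$ and $T\subseteq M_{n'}$ be noncommutative graphs. Then (1) for every $n\times n$ unitary matrix $U$, $\mathcal{H}(S)=\mathcal{H}(U^\dagger SU)$, where $U^\dagger SU=\{U^\dagger AU: A\in S\}$; and (2) $\mathcal{H}(S\oplus T)=\mathcal{H}(S)+\mathcal{H}(T)$, where $S\oplus T=\{A\oplus B: A\in S, B\in T\}\subseteq M_{n+n'}$ is the space of block-diagonal matrices.
   Context: All scalars are complex; $M_n$ denotes complex $n\times n$ matrices. A noncommutative graph is a linear subspace $S\subseteq M_n$ that contains $I_n$ and is closed under conjugate transpose. For a subspace $S\subseteq M_n$, $M_m(S)$ denotes the set of $m\times m$ block matrices $B=[B_{i,j}]_{i,j\in[m]}$ with every block $B_{i,j}\in S$, viewed as elements of $M_{mn}$. The Haemers bound is $\mathcal{H}(S)=\min\{\mathrm{rk}(B):\ m\in\mathbb{N},\ B\in M_m(S),\ \sum_{i=1}^m B_{i,i}=I_n\}$. *)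

From HB Require Import structures.
From mathcomp Require Import all_boot all_order all_algebra.
From mathcomp Require Import boolp.
From mathcomp Require Import complex.
From mathcomp Require Import Rstruct.
Set Implicit Arguments. Unset Strict Implicit. Unset Printing Implicit Defensive.
Import Order.TTheory GRing.Theory Num.Theory.
Local Open Scope ring_scope.

Definition C : Type := complex Rdefinitions.R.

Definition adj {m n : nat} (A : 'M[C]_(m, n)) : 'M[C]_(n, m) :=
  (map_mx (fun z : C => z^*) A)^T.

Definition unitary {n : nat} (U : 'M[C]_n) : Prop :=
  adj U *m U = 1%:M /\ U *m adj U = 1%:M.

Definition ncgraph {n : nat} (S : {vspace 'M[C]_n}) : Prop :=
  (1%:M \in S) /\ (forall A, A \in S -> adj A \in S).

Definition conjsp {n : nat} (U : 'M[C]_n) (S : {vspace 'M[C]_n}) : {vspace 'M[C]_n} :=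
  (linfun (fun A : 'M[C]_n => adj U *m A *m U) @: S)%VS.

(* S (+) T = { A (+) B : A in S, B in T }
   = { A (+) 0 : A in S } + { 0 (+) B : B in T } *)
Definition dsumsp {n n' : nat} (S : {vspace 'M[C]_n}) (T : {vspace 'M[C]_n'})
  : {vspace 'M[C]_(n + n')} :=
  (linfun (fun A : 'M[C]_n => block_mx A 0 0 (0 : 'M[C]_n')) @: S
   + linfun (fun B : 'M[C]_n' => block_mx (0 : 'M[C]_n) 0 0 B) @: T)%VS.

Definition haemers_feasible {n : nat} (S : {vspace 'M[C]_n}) (r : nat) : Prop :=
  exists (m : nat) (F : 'I_m -> 'I_m -> 'M[C]_n),
    (forall i j, F i j \in S) /\
    \sum_(i < m) F i i = 1%:M /\
    \rank (\mxblock_(i < m, j < m) F i j) = r.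

Lemma haemers_ex_asbool {n : nat} (S : {vspace 'M[C]_n}) :
  (exists r, haemers_feasible S r) -> exists r, `[< haemers_feasible S r >].
Proof. by case=> r hr; exists r; apply/asboolP. Qed.

(* H(S) = min of the feasible ranks (0 by convention if there are none,
   which never happens for a noncommutative graph). *)
Definition haemers {n : nat} (S : {vspace 'M[C]_n}) : nat :=
  match pselect (exists r, haemers_feasible S r) with
  | left ex => ex_minn (haemers_ex_asbool ex)
  | right _ => 0%N
  end.

From HB Require Import structures.
From mathcomp Require Import all_boot all_order all_algebra.
From mathcomp Require Import boolp complex Rstruct.
Set Implicit Arguments. Unset Strict Implicit. Unset Printing Implicit Defensive.
Import Order.TTheory GRing.Theory Num.Theory.
Local Open Scope ring_scope.

(* The Haemers bound can only drop under compression: if [X *m Y = 1] and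
   [X A Y \in S'] for every [A \in S], then compressing a feasible block matrix
   [[B_ij]] for [S] blockwise to [[X B_ij Y] = (I (x) X) [B_ij] (I (x) Y)] yields
   a feasible matrix for [S'] of no larger rank.  Unitary conjugation and its
   inverse are such compressions, which gives (1).  For (2), compressing a
   feasible matrix for [S (+) T] by the two diagonal projections yields feasible
   matrices for [S] and [T]; they are the diagonal blocks of one compression of
   it whose off-diagonal blocks vanish, so their ranks add up to at most its
   rank.  Conversely, feasible matrices for [S] and [T] placed side by side
   along the index set ['I_(m + m')] form a feasible matrix for [S (+) T] whose
   rank is at most the sum of theirs. *)

Section BlockReindex.
Variables (R : pzRingType) (m m2 : nat) (g : 'I_m2 -> option 'I_m).

(* [reindex_mx g X] is the Kronecker product [P_g (x) X] of the 0/1 matrix of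
   the partial map [g] with [X]; [reindex_trmx g Y] is [P_g^T (x) Y]. *)
Definition reindex_mx p q (X : 'M[R]_(p, q)) : 'M_(\sum_(k < m2) p, \sum_(i < m) q) :=
  \mxblock_(k < m2, i < m) (if g k == Some i then X else 0).

Definition reindex_trmx p q (Y : 'M[R]_(p, q)) : 'M_(\sum_(i < m) p, \sum_(k < m2) q) :=
  \mxblock_(i < m, k < m2) (if g k == Some i then Y else 0).

Definition reindex_block p q p2 q2 (X : 'M[R]_(p2, p)) (F : 'I_m -> 'I_m -> 'M[R]_(p, q))
    (Y : 'M[R]_(q, q2)) (k l : 'I_m2) : 'M[R]_(p2, q2) :=
  if (g k, g l) is (Some i, Some j) then X *m F i j *m Y else 0.

Lemma sum_reindex_mulmx p q r (X : 'M[R]_(p, q)) (G : 'I_m -> 'M[R]_(q, r)) k :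
  \sum_(i < m) (if g k == Some i then X else 0) *m G i = oapp (fun i => X *m G i) 0 (g k).
Proof.
case: (g k) => [i0|] /=; last by rewrite big1 // => i _; rewrite mul0mx.
rewrite (bigD1 i0) //= eqxx big1 ?addr0 // => i /negPf ne.
by rewrite -[Some i0 == _]/(i0 == i) eq_sym ne mul0mx.
Qed.

Lemma sum_mulmx_reindex p q r (G : 'I_m -> 'M[R]_(p, q)) (Y : 'M[R]_(q, r)) l :
  \sum_(j < m) G j *m (if g l == Some j then Y else 0) = oapp (fun j => G j *m Y) 0 (g l).
Proof.
case: (g l) => [j0|] /=; last by rewrite big1 // => j _; rewrite mulmx0.
rewrite (bigD1 j0) //= eqxx big1 ?addr0 // => j /negPf ne.
by rewrite -[Some j0 == _]/(j0 == j) eq_sym ne mulmx0.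
Qed.

Lemma mxblock_reindexE p q p2 q2 (X : 'M[R]_(p2, p)) (F : 'I_m -> 'I_m -> 'M[R]_(p, q))
    (Y : 'M[R]_(q, q2)) :
  \mxblock_(k, l) reindex_block X F Y k l
    = reindex_mx X *m \mxblock_(i, j) F i j *m reindex_trmx Y.
Proof.
rewrite /reindex_mx /reindex_trmx !mul_mxblock; apply/eq_mxblock => k l.
under eq_bigr do rewrite sum_reindex_mulmx.
rewrite sum_mulmx_reindex /reindex_block.
by case: (g k) => [i|]; case: (g l) => [j|] //=; rewrite mul0mx.
Qed.

End BlockReindex.

Lemma mxblock_compressE (R : pzRingType) m p q p2 q2 (X : 'M[R]_(p2, p))
    (F : 'I_m -> 'I_m -> 'M[R]_(p, q)) (Y : 'M[R]_(q, q2)) :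
  \mxblock_(i, j) (X *m F i j *m Y)
    = reindex_mx Some X *m \mxblock_(i, j) F i j *m reindex_trmx Some Y.
Proof. exact: (mxblock_reindexE Some). Qed.

Lemma mxrank_mxblock_reindex (F : fieldType) m m2 (g : 'I_m2 -> option 'I_m) p q p2 q2
    (X : 'M[F]_(p2, p)) (A : 'I_m -> 'I_m -> 'M[F]_(p, q)) (Y : 'M[F]_(q, q2)) :
  (\rank (\mxblock_(k, l) reindex_block g X A Y k l) <= \rank (\mxblock_(i, j) A i j))%N.
Proof.
rewrite mxblock_reindexE.
exact: leq_trans (mxrankM_maxl _ _) (mxrankM_maxr _ _).
Qed.

Lemma mxrank_mxblock_compress (F : fieldType) m p q p2 q2
    (X : 'M[F]_(p2, p)) (A : 'I_m -> 'I_m -> 'M[F]_(p, q)) (Y : 'M[F]_(q, q2)) :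
  (\rank (\mxblock_(i, j) (X *m A i j *m Y)) <= \rank (\mxblock_(i, j) A i j))%N.
Proof. exact: (mxrank_mxblock_reindex Some). Qed.

Section BlockProjections.
Variables (R : pzRingType) (n n' : nat).

Definition lproj_mx : 'M[R]_(n, n + n') := row_mx 1%:M 0.
Definition rproj_mx : 'M[R]_(n', n + n') := row_mx 0 1%:M.

Lemma lproj_mxT : lproj_mx^T = col_mx 1%:M 0.
Proof. by rewrite tr_row_mx trmx1 trmx0. Qed.

Lemma rproj_mxT : rproj_mx^T = col_mx 0 1%:M.
Proof. by rewrite tr_row_mx trmx1 trmx0. Qed.

Lemma compress_block_mx (a : 'M[R]_n) b c (d : 'M[R]_n') :
  [/\ lproj_mx *m block_mx a b c d *m lproj_mx^T = a,
      lproj_mx *m block_mx a b c d *m rproj_mx^T = b,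
      rproj_mx *m block_mx a b c d *m lproj_mx^T = c
    & rproj_mx *m block_mx a b c d *m rproj_mx^T = d].
Proof.
rewrite lproj_mxT rproj_mxT /lproj_mx /rproj_mx !mul_row_block !mul_row_col.
by split; rewrite !mul1mx !mul0mx !mulmx1 !mulmx0 ?addr0 ?add0r.
Qed.

Lemma expand_lproj_mx (a : 'M[R]_n) : lproj_mx^T *m a *m lproj_mx = block_mx a 0 0 0.
Proof.
by rewrite lproj_mxT /lproj_mx mul_col_mx mul_col_row ?mul1mx ?mul0mx ?mulmx1 ?mulmx0.
Qed.

Lemma expand_rproj_mx (b : 'M[R]_n') : rproj_mx^T *m b *m rproj_mx = block_mx 0 0 0 b.
Proof.
by rewrite rproj_mxT /rproj_mx mul_col_mx mul_col_row ?mul1mx ?mul0mx ?mulmx1 ?mulmx0.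
Qed.

Lemma lproj_mxK : lproj_mx *m lproj_mx^T = 1%:M.
Proof. by rewrite lproj_mxT /lproj_mx mul_row_col mulmx1 mul0mx addr0. Qed.

Lemma rproj_mxK : rproj_mx *m rproj_mx^T = 1%:M.
Proof. by rewrite rproj_mxT /rproj_mx mul_row_col mulmx1 mul0mx add0r. Qed.

End BlockProjections.

Lemma memv_img_linfunP (aT rT : vectType C) (f : aT -> rT) (U : {vspace aT}) y :
  linear f -> reflect (exists2 x, x \in U & y = f x) (y \in (linfun f @: U)%VS).
Proof.
move=> f_lin; pose lf : {linear aT -> rT} := HB.pack f (GRing.isLinear.Build _ _ _ _ f f_lin).
by apply: (iffP memv_imgP) => -[x Ux ->]; exists x; rewrite // (lfunE lf).
Qed.

Section Haemers.
Variable n : nat.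
Implicit Types S : {vspace 'M[C]_n}.

Lemma haemers_feasible_unit S : 1%:M \in S -> exists r, haemers_feasible S r.
Proof.
move=> S1; exists (\rank (\mxblock_(i < 1, j < 1) (1%:M : 'M[C]_n))).
by exists 1%N, (fun _ _ => 1%:M); rewrite big_ord1.
Qed.

Lemma haemers_min S r : haemers_feasible S r -> (haemers S <= r)%N.
Proof.
move=> Sr; rewrite /haemers; case: pselect => [ex|[]]; last by exists r.
by case: ex_minnP => r0 _; apply; apply/asboolP.
Qed.

Lemma feasible_haemers S : 1%:M \in S -> haemers_feasible S (haemers S).
Proof.
move=> /haemers_feasible_unit ex; rewrite /haemers; case: pselect => // ex'.
by case: ex_minnP => r /asboolP.
Qed.

End Haemers.

Lemma haemers_feasible_mxblock_compress n n2 (S' : {vspace 'M[C]_n2}) m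
    (A : 'I_m -> 'I_m -> 'M[C]_n) (X : 'M[C]_(n2, n)) (Y : 'M[C]_(n, n2)) :
  X *m Y = 1%:M -> \sum_(i < m) A i i = 1%:M -> (forall i j, X *m A i j *m Y \in S') ->
  haemers_feasible S' (\rank (\mxblock_(i, j) (X *m A i j *m Y))).
Proof.
move=> XY sumA XAY; exists m, (fun i j => X *m A i j *m Y); split=> //.
by rewrite -mulmx_suml -mulmx_sumr sumA mulmx1 XY.
Qed.

Lemma haemers_compress n n2 (S : {vspace 'M[C]_n}) (S' : {vspace 'M[C]_n2})
    (X : 'M[C]_(n2, n)) (Y : 'M[C]_(n, n2)) :
  1%:M \in S -> X *m Y = 1%:M -> (forall A, A \in S -> X *m A *m Y \in S') ->
  (haemers S' <= haemers S)%N.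
Proof.
move=> S1 XY XSY; have [m [A [SA [sumA <-]]]] := feasible_haemers S1.
apply: leq_trans (haemers_min _) (mxrank_mxblock_compress X A Y).
by apply: haemers_feasible_mxblock_compress => // i j; apply: XSY.
Qed.

Section Conjugation.
Variables (n : nat) (U : 'M[C]_n).

Lemma conj_linear : linear (fun A : 'M[C]_n => adj U *m A *m U).
Proof. by move=> a A B /=; rewrite mulmxDr mulmxDl -scalemxAr -scalemxAl. Qed.

Lemma conjspP (S : {vspace 'M[C]_n}) B :
  reflect (exists2 A, A \in S & B = adj U *m A *m U) (B \in conjsp U S).
Proof. exact/memv_img_linfunP/conj_linear. Qed.

Lemma haemers_conjsp (S : {vspace 'M[C]_n}) :
  1%:M \in S -> unitary U -> haemers (conjsp U S) = haemers S.
Proof.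
move=> S1 [UU' U'U].
have conjS A : A \in S -> adj U *m A *m U \in conjsp U S.
  by move=> SA; apply/conjspP; exists A.
apply/eqP; rewrite eqn_leq (haemers_compress S1 UU' conjS) /=.
apply: (haemers_compress (X := U) (Y := adj U)) => // [|_ /conjspP[A SA ->]].
  by apply/conjspP; exists 1%:M; rewrite ?mulmx1.
by rewrite !mulmxA U'U mul1mx -mulmxA U'U mulmx1.
Qed.

End Conjugation.

Section DirectSum.
Variables (n n' : nat) (S : {vspace 'M[C]_n}) (T : {vspace 'M[C]_n'}).

Lemma block_lin_l : linear (fun A : 'M[C]_n => block_mx A 0 0 (0 : 'M[C]_n')).
Proof. by move=> a A B; rewrite scale_block_mx add_block_mx !scaler0 !addr0. Qed.

Lemma block_lin_r : linear (fun B : 'M[C]_n' => block_mx (0 : 'M[C]_n) 0 0 B).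
Proof. by move=> a A B; rewrite scale_block_mx add_block_mx !scaler0 !addr0. Qed.

Lemma dsumspP G :
  reflect (exists a b, [/\ a \in S, b \in T & G = block_mx a 0 0 b]) (G \in dsumsp S T).
Proof.
apply: (iffP memv_addP) => [|[a [b [Sa Tb ->]]]].
  move=> [_ /memv_img_linfunP-/(_ block_lin_l)[a Sa ->]].
  move=> [_ /memv_img_linfunP-/(_ block_lin_r)[b Tb ->] ->].
  by exists a, b; rewrite add_block_mx !addr0 add0r.
exists (block_mx a 0 0 0); first by apply/memv_img_linfunP; [apply: block_lin_l | exists a].
exists (block_mx 0 0 0 b); first by apply/memv_img_linfunP; [apply: block_lin_r | exists b].
by rewrite add_block_mx !addr0 add0r.
Qed.

Lemma mem_dsumsp a b : a \in S -> b \in T -> block_mx a 0 0 b \in dsumsp S T.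
Proof. by move=> Sa Tb; apply/dsumspP; exists a, b. Qed.

Lemma unit_dsumsp : 1%:M \in S -> 1%:M \in T -> 1%:M \in dsumsp S T.
Proof. by move=> S1 T1; rewrite (scalar_mx_block n n'); apply: mem_dsumsp. Qed.

Lemma compress_dsumsp G : G \in dsumsp S T ->
  let L := lproj_mx C n n' in let R := rproj_mx C n n' in
  [/\ L *m G *m L^T \in S, R *m G *m R^T \in T, L *m G *m R^T = 0 & R *m G *m L^T = 0].
Proof.
by move=> /dsumspP[a [b [Sa Tb ->]]] /=; have [-> -> -> ->] := compress_block_mx a 0 0 b.
Qed.

Lemma haemers_dsumsp_le :
  1%:M \in S -> 1%:M \in T -> (haemers (dsumsp S T) <= haemers S + haemers T)%N.
Proof.
move=> S1 T1.
have [m [A [SA [sumA <-]]]] := feasible_haemers S1.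
have [m' [B [TB [sumB <-]]]] := feasible_haemers T1.
pose gl (k : 'I_(m + m')) := if split k is inl i then Some i else None.
pose gr (k : 'I_(m + m')) := if split k is inr i then Some i else None.
pose L := lproj_mx C n n'; pose R := rproj_mx C n n'.
(* Laying out [A] and [B] as reindexed compressions makes the rank bound
   an instance of [mxrank_mxblock_reindex]. *)
pose G k l := reindex_block gl L^T A L k l + reindex_block gr R^T B R k l.
have GE k l : G k l = match split k, split l with
    | inl i, inl j => block_mx (A i j) 0 0 0
    | inr i, inr j => block_mx 0 0 0 (B i j)
    | _, _ => 0 end.
  rewrite /G /reindex_block /gl /gr.
  by case: (split k) => i; case: (split l) => j;
    rewrite ?expand_lproj_mx ?expand_rproj_mx ?addr0 ?add0r.
have feasG : haemers_feasible (dsumsp S T) (\rank (\mxblock_(k, l) G k l)).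
  exists (m + m'), G; split.
    by move=> k l; rewrite GE; case: (split k) => i; case: (split l) => j;
      rewrite ?mem0v // mem_dsumsp ?mem0v.
  rewrite big_split_ord /=.
  under eq_bigr do rewrite GE (unsplitK (inl _)) -expand_lproj_mx.
  under [X in _ + X]eq_bigr do rewrite GE (unsplitK (inr _)) -expand_rproj_mx.
  rewrite -!mulmx_suml -!mulmx_sumr sumA sumB expand_lproj_mx expand_rproj_mx.
  by rewrite add_block_mx !addr0 add0r -scalar_mx_block.
apply: leq_trans (haemers_min feasG) _; rewrite /G mxblockD.
by apply: leq_trans (mxrank_add _ _) (leq_add _ _); apply: mxrank_mxblock_reindex.
Qed.

Lemma haemers_dsumsp_ge :
  1%:M \in S -> 1%:M \in T -> (haemers S + haemers T <= haemers (dsumsp S T))%N.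
Proof.
move=> S1 T1; have [m [G [STG [sumG <-]]]] := feasible_haemers (unit_dsumsp S1 T1).
pose L := lproj_mx C n n'; pose R := rproj_mx C n n'.
have feasS : haemers_feasible S (\rank (\mxblock_(i, j) (L *m G i j *m L^T))).
  apply: haemers_feasible_mxblock_compress => // [|i j]; first exact: lproj_mxK.
  by have [] := compress_dsumsp (STG i j).
have feasT : haemers_feasible T (\rank (\mxblock_(i, j) (R *m G i j *m R^T))).
  apply: haemers_feasible_mxblock_compress => // [|i j]; first exact: rproj_mxK.
  by have [] := compress_dsumsp (STG i j).
have offLR : \mxblock_(i, j) (L *m G i j *m R^T) = 0.
  by rewrite -mxblock0; apply/eq_mxblock => i j; have [] := compress_dsumsp (STG i j).
have offRL : \mxblock_(i, j) (R *m G i j *m L^T) = 0.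
  by rewrite -mxblock0; apply/eq_mxblock => i j; have [] := compress_dsumsp (STG i j).
apply: leq_trans (leq_add (haemers_min feasS) (haemers_min feasT)) _.
rewrite -rank_diag_block_mx -offLR -offRL !mxblock_compressE -mul_col_row -mul_col_mx.
exact: leq_trans (mxrankM_maxl _ _) (mxrankM_maxr _ _).
Qed.

End DirectSum.

Theorem mainTheorem8 (n n' : nat) (S : {vspace 'M[C]_n}) (T : {vspace 'M[C]_n'}) :
  ncgraph S -> ncgraph T ->
  (forall U : 'M[C]_n, unitary U -> haemers S = haemers (conjsp U S)) /\
  haemers (dsumsp S T) = (haemers S + haemers T)%N.
Proof.
move=> [S1 _] [T1 _]; split=> [U U_unitary|].
  by rewrite haemers_conjsp.
by apply/eqP; rewrite eqn_leq haemers_dsumsp_le ?haemers_dsumsp_ge.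
Qed.
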